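(* Let $G$ be a $\Delta$-regular multigraph of even order, and let $S \subsetneq V(G)$ with $|S|$ odd and $|S| \ge 3$ be such that $\langle S\rangle$ is $\Delta$-full or $\Delta$-overfull, and such that $\operatorname{ex}(\langle S\rangle, \Delta)$ is maximum among all induced odd-order subgraphs of $G$ of order at least 3 that are $\Delta$-full or $\Delta$-overfull. Then $\Delta(G_S) \le \Delta$ and $\Gamma(G_S) \le \Gamma(G)$, and similarly $\Delta(G_{S^c}) \le \Delta$ and $\Gamma(G_{S^c}) \le \Gamma(G)$, where $S^c = V(G)\setminus S$.
   Context: Multigraphs are finite and loopless, multiple edges allowed. For $S \subseteq V(G)$, $\langle S\rangle$ is the induced subgraph and $\partial(S)$ the set of edges with exactly one end in $S$. For a multigraph $H$ of odd order $n(H)\ge 3$ with $e(H)$ edges, $t(H) = 2e(H)/(n(H)-1)$; $H$ is $k$-full if $t(H)=k$ and $k$-overfull if $t(H)>k$. The $k$-excess is $\operatorname{ex}(H,k) = e(H) - k(n(H)-1)/2$. $\Gamma(G) = \max\{t(\langle R\rangle) : R\subseteq V(G), |R| \text{ odd}, |R|\ge 3\}$ (statements about $\Gamma$ of a multigraph with no such $R$ are vacuous). Shrinking: for a nonempty proper subset $S$ of $V(G)$, $G_S$ has vertex set $(V(G)\setminus S)\cup\{s\}$ for a new vertex $s$; its edges are the edges of $G - S$ together with, for each $u \notin S$, exactly as many edges $us$ as there are edges of $G$ joining $u$ to vertices of $S$. *)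

From mathcomp Require Import all_boot all_order all_algebra.
Set Implicit Arguments. Unset Strict Implicit. Unset Printing Implicit Defensive.
Import Order.TTheory GRing.Theory Num.Theory.

(* A finite loopless multigraph with vertices drawn from a finite type T:
   its vertex set [vtx] and the number [mult x y] of edges joining x and y
   (only values on vtx x vtx are meaningful). *)
Record mgraph (T : finType) := MGraph { vtx : {set T}; mult : T -> T -> nat }.

Definition is_mgraph (T : finType) (G : mgraph T) : Prop :=
  (forall x y, x \in vtx G -> y \in vtx G -> mult G x y = mult G y x) /\
  (forall x, x \in vtx G -> mult G x x = 0%N).

Definition deg (T : finType) (G : mgraph T) (x : T) : nat :=
  \sum_(y in vtx G) mult G x y.

Definition maxdeg (T : finType) (G : mgraph T) : nat :=
  \max_(x in vtx G) deg G x.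

Definition regular (T : finType) (G : mgraph T) (D : nat) : Prop :=
  forall x, x \in vtx G -> deg G x = D.

(* number of edges of the induced subgraph <R>: each edge counted twice
   in the ordered-pair sum *)
Definition e_ind (T : finType) (G : mgraph T) (R : {set T}) : nat :=
  (\sum_(x in R) \sum_(y in R) mult G x y)./2.

Definition tdens (T : finType) (G : mgraph T) (R : {set T}) : rat :=
  ((2 * e_ind G R)%:R / (#|R|.-1)%:R)%R.

Definition excess (T : finType) (G : mgraph T) (R : {set T}) (k : nat) : rat :=
  ((e_ind G R)%:R - (k * #|R|.-1)%:R / 2%:R)%R.

Definition odd_big (T : finType) (G : mgraph T) (R : {set T}) : bool :=
  [&& R \subset vtx G, odd #|R| & 3 <= #|R|].

(* Gamma(G) = max t(<R>) over odd R, |R| >= 3 (default 0 when there is no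
   such R; t is nonnegative so this is the true maximum otherwise) *)
Definition Gamma (T : finType) (G : mgraph T) : rat :=
  \big[Num.max/0%R]_(R : {set T} | odd_big G R) tdens G R.

(* Shrinking S to a single new vertex s; new vertex type option T, with
   s = None and u = Some u for u outside S. *)
Definition shrink_mult (T : finType) (G : mgraph T) (S : {set T})
    (a b : option T) : nat :=
  match a, b with
  | Some u, Some v => mult G u v
  | Some u, None => \sum_(w in S :&: vtx G) mult G u w
  | None, Some v => \sum_(w in S :&: vtx G) mult G v w
  | None, None => 0%N
  end.

Definition shrink (T : finType) (G : mgraph T) (S : {set T}) : mgraph (option T) :=
  MGraph ([set Some x | x in vtx G :\: S] :|: [set None]) (shrink_mult G S).

From mathcomp Require Import all_boot all_order all_algebra.
From mathcomp Require Import zify lra.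
Import Order.TTheory GRing.Theory Num.Theory.
Set Implicit Arguments. Unset Strict Implicit. Unset Printing Implicit Defensive.

(* Let e(A,B) count ordered adjacent pairs, so e(R,R) = 2e(<R>).
   The maximality of ex(S) holds against every odd R, overfull or not:
   singletons have excess 0, non-overfull sets negative excess, and ex(S) >= 0.
   An odd vertex set of G_X avoiding the new vertex s is an odd set of G, with
   the same density; one containing s is R + s with R even in V \ X, and its
   density is at most Delta as soon as e(R,R) + 2e(R,X) <= Delta |R|.  For
   X = S this is ex(S u R) <= ex(S); for X = V \ S it is ex(S \ R) <= ex(S)
   combined with Delta-regularity, which also gives deg s = e(S, V \ S) =
   Delta |S| - e(S,S) <= Delta.  Finally Gamma(G) >= t(S) >= Delta. *)

Lemma big_option_cond (R : Type) (idx : R) (op : Monoid.com_law idx)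
    (T : finType) (P : pred (option T)) (F : option T -> R) :
  \big[op/idx]_(a | P a) F a =
  op (if P None then F None else idx) (\big[op/idx]_(x | P (Some x)) F (Some x)).
Proof.
rewrite (bigID (pred1 None)) /=; congr (op _ _).
  case: ifP => PN; first by rewrite (big_pred1 None) // => -[a|] /=; rewrite ?PN ?andbF.
  by rewrite big_pred0 // => -[a|] /=; rewrite ?PN ?andbF.
rewrite (reindex_omap Some id) /=; last by case=> [a|] //= /andP[].
by apply: eq_bigl => x; rewrite eqxx !andbT.
Qed.

Section EdgeSums.
Variables (T : finType) (G : mgraph T).

Definition esum (A B : {set T}) : nat := \sum_(x in A) \sum_(y in B) mult G x y.

Lemma esumIDl (A B C : {set T}) : esum A C = esum (A :&: B) C + esum (A :\: B) C.
Proof. exact: big_setID. Qed.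

Lemma esumIDr (A B C : {set T}) : esum A C = esum A (C :&: B) + esum A (C :\: B).
Proof. by rewrite /esum -big_split; apply: eq_bigr => x _; apply: big_setID. Qed.

Lemma esum_vtx (D : nat) (A : {set T}) :
  regular G D -> A \subset vtx G -> esum A (vtx G) = D * #|A|.
Proof.
move=> regG sAV; rewrite /esum (eq_bigr (fun=> D)) ?sum_nat_const 1?mulnC //.
by move=> x /(subsetP sAV); apply: regG.
Qed.

Hypothesis wfG : is_mgraph G.

Lemma esumC (A B : {set T}) :
  A \subset vtx G -> B \subset vtx G -> esum A B = esum B A.
Proof.
case: wfG => symG _ sAV sBV; rewrite /esum exchange_big.
apply: eq_bigr => y By; apply: eq_bigr => x Ax.
by apply: symG; [apply: (subsetP sAV) | apply: (subsetP sBV)].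
Qed.

Lemma esum_set1 x : x \in vtx G -> esum [set x] [set x] = 0.
Proof. by move=> xV; rewrite /esum !big_set1 wfG.2. Qed.

Lemma esum_setD1 (R : {set T}) x : R \subset vtx G -> x \in R ->
  esum R R = (esum [set x] (R :\ x)).*2 + esum (R :\ x) (R :\ x).
Proof.
move=> sRV Rx; have xV : x \in vtx G := subsetP sRV x Rx.
have sR1 : R :&: [set x] = [set x] by apply/setIidPr; rewrite sub1set.
have sRxV : R :\ x \subset vtx G := subset_trans (subsetDl R _) sRV.
have sxV : [set x] \subset vtx G by rewrite sub1set.
rewrite (esumIDl _ [set x]) !(esumIDr _ [set x] R) sR1 (esumC sRxV sxV).
by rewrite esum_set1 // -addnn !addnA.
Qed.

Lemma esum_even (R : {set T}) : R \subset vtx G -> ~~ odd (esum R R).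
Proof.
elim: {R}_.+1 {-2}R (ltnSn #|R|) => // n IHn R leRn sRV.
have [->|[x Rx]] := set_0Vmem R; first by rewrite /esum big_set0.
rewrite (esum_setD1 sRV Rx) oddD odd_double IHn //.
  by rewrite (cardsD1 x R) Rx in leRn.
exact: subset_trans (subsetDl R _) sRV.
Qed.

Lemma e_indE (R : {set T}) : R \subset vtx G -> 2 * e_ind G R = esum R R.
Proof.
move=> sRV; rewrite mul2n -[RHS]odd_double_half.
by rewrite (negbTE (esum_even sRV)).
Qed.

End EdgeSums.

Section Density.
Variables (T : finType) (G : mgraph T).

Lemma ler_nat_tdens (R : {set T}) (k : nat) : (1 < #|R|)%N ->
  (k%:R <= tdens G R)%R = (k * #|R|.-1 <= 2 * e_ind G R)%N.
Proof.
by move=> gt1R; rewrite ler_pdivlMr ?ltr0n -?natrM ?ler_nat //; case: #|R| gt1R.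
Qed.

Lemma tdens_ler_nat (R : {set T}) (k : nat) : (1 < #|R|)%N ->
  (tdens G R <= k%:R)%R = (2 * e_ind G R <= k * #|R|.-1)%N.
Proof.
by move=> gt1R; rewrite ler_pdivrMr ?ltr0n -?natrM ?ler_nat //; case: #|R| gt1R.
Qed.

Lemma ler_excess (R S : {set T}) (k : nat) :
  (excess G R k <= excess G S k)%R =
  (2 * e_ind G R + k * #|S|.-1 <= 2 * e_ind G S + k * #|R|.-1)%N.
Proof.
rewrite -(ler_nat rat) !natrD !natrM /excess.
by apply/idP/idP => le_ex; lra.
Qed.

Lemma tdens_le_Gamma (R : {set T}) : odd_big G R -> (tdens G R <= Gamma G)%R.
Proof. by move=> obR; rewrite /Gamma (bigD1 R) //= le_max lexx. Qed.

End Density.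

Lemma card_option_set (T : finType) (A : {set option T}) :
  #|A| = (None \in A) + #|Some @^-1: A|.
Proof.
rewrite -!sum1_card big_option_cond; congr (_ + _).
by apply: eq_bigl => x; rewrite inE.
Qed.

Section Shrink.
Variables (T : finType) (G : mgraph T) (X : {set T}).
Hypothesis sXV : X \subset vtx G.

Let XV : X :&: vtx G = X. Proof. exact/setIidPl. Qed.

Lemma mem_shrink_Some x : (Some x \in vtx (shrink G X)) = (x \in vtx G :\: X).
Proof. by rewrite /= in_setU in_set1 orbF (mem_imset _ _ (@Some_inj _)). Qed.

Lemma mem_shrink_None : None \in vtx (shrink G X).
Proof. by rewrite /= !inE eqxx orbT. Qed.

Lemma deg_shrink_Some u : deg (shrink G X) (Some u) = deg G u.
Proof.
rewrite /deg big_option_cond mem_shrink_None /= XV [RHS](big_setID X).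
by rewrite (setIidPr sXV); congr (_ + _); apply: eq_bigl => x; rewrite mem_shrink_Some.
Qed.

Lemma deg_shrink_None : deg (shrink G X) None = esum G (vtx G :\: X) X.
Proof.
rewrite /deg big_option_cond mem_shrink_None /= XV add0n.
by apply: eq_bigl => x; rewrite mem_shrink_Some.
Qed.

Lemma maxdeg_shrink (D : nat) : regular G D ->
  esum G (vtx G :\: X) X <= D -> maxdeg (shrink G X) <= D.
Proof.
move=> regG bdX; apply/bigmax_leqP => -[u|]; last by rewrite deg_shrink_None.
by rewrite mem_shrink_Some deg_shrink_Some => /setDP[/regG ->].
Qed.

Lemma esum_shrink (R' : {set option T}) :
  esum (shrink G X) R' R' =
  (None \in R') * (esum G (Some @^-1: R') X).*2 + esum G (Some @^-1: R') (Some @^-1: R').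
Proof.
set R := Some @^-1: R'.
have sumR (F : T -> nat) : \sum_(x | Some x \in R') F x = \sum_(x in R) F x.
  by apply: eq_bigl => x; rewrite inE.
rewrite /esum; under eq_bigr do rewrite big_option_cond sumR.
rewrite big_option_cond sumR /= XV.
case: (None \in R'); rewrite /= ?add0n ?mul1n ?mul0n.
  by rewrite big_split /= addnA -addnn.
by apply: eq_bigr => x _; rewrite add0n.
Qed.

Hypothesis wfG : is_mgraph G.

Lemma e_ind_shrink (R' : {set option T}) : R' \subset vtx (shrink G X) ->
  e_ind (shrink G X) R' =
  (None \in R') * esum G (Some @^-1: R') X + e_ind G (Some @^-1: R').
Proof.
move=> sR'V; have sRV : Some @^-1: R' \subset vtx G.
  apply/subsetP => x; rewrite inE => /(subsetP sR'V).
  by rewrite mem_shrink_Some => /setDP[].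
rewrite [LHS]/e_ind -/(esum _ R' R') esum_shrink -(e_indE wfG sRV).
by rewrite -doubleMr -mul2n -mulnDr mul2n doubleK.
Qed.

Lemma Gamma_shrink (D : nat) : (D%:R <= Gamma G)%R ->
  (forall R : {set T}, R \subset vtx G :\: X -> ~~ odd #|R| ->
     esum G R R + (esum G R X).*2 <= D * #|R|) ->
  (Gamma (shrink G X) <= Gamma G)%R.
Proof.
move=> DGam evenR; have Gam0 : (0 <= Gamma G)%R := le_trans (ler0n _ _) DGam.
rewrite {1}/Gamma; apply: (big_ind (fun x => x <= Gamma G)%R) => //.
  by move=> x y lexG leyG; rewrite ge_max lexG leyG.
move=> R' /and3P[sR'V oddR' ge3R']; set R := Some @^-1: R'.
have sRVX : R \subset vtx G :\: X.
  by apply/subsetP => x; rewrite inE => /(subsetP sR'V); rewrite mem_shrink_Some.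
have sRV : R \subset vtx G := subset_trans sRVX (subsetDl _ _).
have eR' := e_ind_shrink sR'V; have cardR' := card_option_set R'.
case: (boolP (None \in R')) => NR' in eR' cardR' *; rewrite -/R /= in eR' cardR'.
  have evR : ~~ odd #|R| by move: oddR'; rewrite cardR' add1n.
  apply: (le_trans _ DGam); rewrite tdens_ler_nat; last by lia.
  rewrite eR' cardR' add1n /= mul1n mulnDr (e_indE wfG sRV) mul2n addnC; exact: evenR.
have -> : tdens (shrink G X) R' = tdens G R by rewrite /tdens eR' cardR'.
by apply: tdens_le_Gamma; rewrite /odd_big sRV -[#|R|]add0n -cardR' oddR'.
Qed.
End Shrink.

Section MaxExcess.
Variables (T : finType) (G : mgraph T) (D : nat) (S : {set T}).
Hypotheses (wfG : is_mgraph G) (regG : regular G D).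
Hypotheses (obS : odd_big G S) (fullS : (D%:R <= tdens G S)%R).
Hypothesis maxS : forall R : {set T}, odd_big G R -> (D%:R <= tdens G R)%R ->
  (excess G R D <= excess G S D)%R.

Let sSV : S \subset vtx G. Proof. by case/and3P: obS. Qed.
Let oddS : odd #|S|. Proof. by case/and3P: obS. Qed.
Let ge3S : 2 < #|S|. Proof. by case/and3P: obS. Qed.

Let fullS_esum : D * #|S|.-1 <= esum G S S.
Proof. by rewrite -(e_indE wfG sSV) -ler_nat_tdens // ltnW. Qed.

Lemma esum_excess_le (R : {set T}) : R \subset vtx G -> odd #|R| ->
  esum G R R + D * #|S|.-1 <= esum G S S + D * #|R|.-1.
Proof.
(* Singletons have excess 0 and non-overfull sets negative excess. *)
move=> sRV oddR; have [lt3R | ge3R] := ltnP #|R| 3.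
  have /cards1P[x Rx] : #|R| == 1 by move: oddR lt3R; case: #|R| => [|[|[]]].
  move: sRV; rewrite Rx sub1set cards1 => xV.
  by rewrite esum_set1 // add0n muln0 addn0.
have [fullR | ] := leqP (D * #|R|.-1) (esum G R R); last by lia.
have obR : odd_big G R by rewrite /odd_big sRV oddR ge3R.
move: (maxS obR); rewrite ler_excess !(e_indE wfG) // ler_nat_tdens; last by lia.
by rewrite (e_indE wfG) //; apply.
Qed.

Lemma esum_boundary_le : esum G S (vtx G :\: S) <= D.
Proof.
have := esum_vtx regG sSV; rewrite (esumIDr _ _ S) (setIidPr sSV).
have -> : D * #|S| = D * #|S|.-1 + D by rewrite -mulnSr prednK // ltnW // ltnW.
by lia.
Qed.

Lemma esum_even_outside_le (R : {set T}) : R \subset vtx G :\: S -> ~~ odd #|R| ->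
  esum G R R + (esum G R S).*2 <= D * #|R|.
Proof.
rewrite subsetD => /andP[sRV dRS] evenR.
have SRS : (S :|: R) :&: S = S := setUK S R.
have SRR : (S :|: R) :\: S = R by rewrite setDUl setDv set0U; apply/setDidPl.
have := esum_excess_le (R := S :|: R).
rewrite subUset sSV sRV -(cardsID S (S :|: R)) SRS SRR oddD oddS (negbTE evenR).
rewrite (esumIDl _ _ S) SRS SRR (esumIDr _ S S) (esumIDr _ R S) SRS SRR.
rewrite (esumC wfG sSV sRV).
have -> : (#|S| + #|R|).-1 = #|S|.-1 + #|R| by lia.
rewrite mulnDr => /(_ isT isT); lia.
Qed.

Lemma esum_even_inside_le (R : {set T}) : R \subset S -> ~~ odd #|R| ->
  esum G R R + (esum G R (vtx G :\: S)).*2 <= D * #|R|.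
Proof.
(* Maximality is applied to the odd set Q = S \ R. *)
move=> sRS evenR; set Q := S :\: R.
have sRV : R \subset vtx G := subset_trans sRS sSV.
have sQV : Q \subset vtx G := subset_trans (subsetDl S R) sSV.
have SR : S :&: R = R by apply/setIidPr.
have cardS : #|R| + #|Q| = #|S| by rewrite -(cardsID R S) SR.
have oddQ : odd #|Q| by move: oddS; rewrite -cardS oddD (negbTE evenR).
have := esum_excess_le sQV oddQ.
rewrite (esumIDl _ S R) SR -/Q (esumIDr _ R R S) (esumIDr _ Q R S) SR -/Q.
rewrite (esumC wfG sQV sRV).
have := esum_vtx regG sRV.
rewrite (esumIDr _ R S (vtx G)) (setIidPr sSV) (esumIDr _ R R S) SR -/Q.
have -> : #|S|.-1 = #|R| + #|Q|.-1.
  by rewrite -cardS; case: #|Q| oddQ => // n _; rewrite addnS.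
rewrite mulnDr; lia.
Qed.
End MaxExcess.

Theorem lemmaG (T : finType) (G : mgraph T) (D : nat) (S : {set T}) :
  is_mgraph G ->
  regular G D ->
  ~~ odd #|vtx G| ->
  S \proper vtx G ->
  odd #|S| -> (3 <= #|S|)%N ->
  (D%:R <= tdens G S)%R ->
  (forall R : {set T}, odd_big G R -> (D%:R <= tdens G R)%R ->
     (excess G R D <= excess G S D)%R) ->
  [/\ (maxdeg (shrink G S) <= D)%N,
      (Gamma (shrink G S) <= Gamma G)%R,
      (maxdeg (shrink G (vtx G :\: S)) <= D)%N &
      (Gamma (shrink G (vtx G :\: S)) <= Gamma G)%R].
Proof.
move=> wfG regG _ ltSV oddS ge3S fullS maxS.
have sSV : S \subset vtx G := proper_sub ltSV.
have sScV : vtx G :\: S \subset vtx G := subsetDl _ _.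
have ScC : vtx G :\: (vtx G :\: S) = S by rewrite setDDr setDv set0U; apply/setIidPr.
have obS : odd_big G S by rewrite /odd_big sSV oddS ge3S.
have DGam : (D%:R <= Gamma G)%R := le_trans fullS (tdens_le_Gamma obS).
have bdS := esum_boundary_le wfG regG obS fullS.
split.
- by apply: maxdeg_shrink; rewrite // (esumC wfG sScV sSV).
- apply: (Gamma_shrink sSV wfG DGam) => R.
  by apply: esum_even_outside_le.
- by apply: maxdeg_shrink; rewrite ?ScC.
- apply: (Gamma_shrink sScV wfG DGam) => R; rewrite ScC.
  by apply: esum_even_inside_le.
Qed.
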